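(* Let $n\ge1$ and $1\le p\le n$. A configuration $C\in\mathcal{S}(n,p)$ is $p$-toppleable if and only if for every $1\le i\le n+1$, $p+i-n-1\le C^{-1}(i)\le p+i-1$, where $C^{-1}(i)$ is the site of chip $i$ in $C$.
   Context: Sites are $0,\dots,n+1$. A configuration in $\mathcal{S}(n,p)$ places $n+1$ distinct chips labeled $1,\dots,n+1$ with sites $0,n+1$ empty, one chip at each site of $\{1,\dots,n\}\setminus\{p\}$ and two chips at site $p$. Toppling: while some site holds at least two chips, choose such a site $i$ and two chips $\alpha<\beta$ there and move $\alpha$ to $i-1$, $\beta$ to $i+1$. It is known this terminates with at most one chip per site within sites $0,\dots,n+1$, and the final configuration is independent of the choices. $C$ is $p$-toppleable if reading the labels of the final configuration from left to right gives $1,2,\dots,n+1$ in increasing order. *)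

(* Chips are labelled by natural numbers 1..n+1; a configuration
   is described by the map  pos : nat -> Z  giving the site of each chip
   (pos i = C^{-1}(i)); values of pos outside chips 1..n+1 are irrelevant. *)
From Stdlib Require Import ZArith List Relations.
Import ListNotations.
Open Scope Z_scope.

Definition chips (n : nat) : list nat := seq 1 (S n).

Definition is_chip (n i : nat) : Prop := (1 <= i <= S n)%nat.

Definition load (n : nat) (pos : nat -> Z) (s : Z) : nat :=
  length (filter (fun i => Z.eqb (pos i) s) (chips n)).

Definition in_S (n p : nat) (pos : nat -> Z) : Prop :=
  (forall i, is_chip n i -> 1 <= pos i <= Z.of_nat n) /\
  (forall s : nat, (1 <= s <= n)%nat ->
      load n pos (Z.of_nat s) = (if Nat.eqb s p then 2%nat else 1%nat)).

Definition topple_step (n : nat) (pos pos' : nat -> Z) : Prop :=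
  exists (a b : nat) (s : Z),
    is_chip n a /\ is_chip n b /\ (a < b)%nat /\ pos a = s /\ pos b = s /\
    forall i, pos' i = (if Nat.eqb i a then s - 1
                        else if Nat.eqb i b then s + 1 else pos i).

Definition topple_reach (n : nat) : relation (nat -> Z) :=
  clos_refl_trans (nat -> Z) (topple_step n).

Definition stable (n : nat) (pos : nat -> Z) : Prop :=
  forall i j, is_chip n i -> is_chip n j -> i <> j -> pos i <> pos j.

Definition reads_increasing (n : nat) (pos : nat -> Z) : Prop :=
  forall i j, is_chip n i -> is_chip n j -> (i < j)%nat -> pos i < pos j.

(* p-toppleable: toppling until stable ends in the increasingly-labelled
   configuration (the final configuration is known to be unique). *)
Definition toppleable (n : nat) (pos : nat -> Z) : Prop :=
  exists fin, topple_reach n pos fin /\ stable n fin /\ reads_increasing n fin.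

(* Toppling from S(n,p) keeps the number of chips on sites <= k equal to k or k + 1, so two
   doubled sites are never adjacent and two possible firings commute. Hence every configuration
   reached still topples to the same final one, and toppleability can be decided along one run.
   Fire sites p, p+1, ..., n in turn: each firing hands the larger chip on, so the largest chip c
   that started on a site >= p ends at site n+1 and never moves again. If c <> n+1, chip n+1
   started left of p, violating its bound, and cannot end up rightmost. If c = n+1, chips 1..n now
   form a configuration of S(n-1,p-1) (for p = 1: a stable one on sites 0..n-1), and a chip
   satisfies the bounds for (n-1,p-1) there exactly when it satisfied those for (n,p) before;
   induction on p concludes. *)

From Stdlib Require Import ZArith List Relations Lia FunctionalExtensionality.
Import ListNotations.
Open Scope bool_scope.
Open Scope Z_scope.

Definition count (l : list nat) (f : nat -> bool) : nat := length (filter f l).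

Lemma count_cons x l f : count (x :: l) f = (Nat.b2n (f x) + count l f)%nat.
Proof. unfold count; simpl; destruct (f x); reflexivity. Qed.

Lemma count_ext l f g : (forall x, In x l -> f x = g x) -> count l f = count l g.
Proof. intros H; unfold count; now rewrite (filter_ext_in f g l H). Qed.

Lemma count_add l f g h :
  (forall x, In x l -> Nat.b2n (f x) = (Nat.b2n (g x) + Nat.b2n (h x))%nat) ->
  count l f = (count l g + count l h)%nat.
Proof.
  induction l as [|y l IH]; intros H; [reflexivity|].
  rewrite !count_cons, (H y (or_introl eq_refl)), IH; [lia|].
  intros x Hx. apply H. now right.
Qed.

Lemma count_le_of_incl l s f :
  NoDup l -> (forall x, In x l -> f x = true -> In x s) -> (count l f <= length s)%nat.
Proof.
  intros Hl H. apply NoDup_incl_length; [now apply NoDup_filter|].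
  intros x Hx. apply filter_In in Hx as [Hx Fx]. auto.
Qed.

Lemma count_ge_of_incl l s f :
  NoDup s -> (forall x, In x s -> In x l /\ f x = true) -> (length s <= count l f)%nat.
Proof.
  intros Hs H. apply NoDup_incl_length; [exact Hs|].
  intros x Hx. now apply filter_In, H.
Qed.

Lemma count_remove l f a : NoDup l -> In a l ->
  count l f = (Nat.b2n (f a) + count l (fun x => negb (Nat.eqb x a) && f x))%nat.
Proof.
  induction l as [|y l IH]; intros Hl Ha; [destruct Ha|].
  inversion_clear Hl as [|? ? Hy Hl']. rewrite !count_cons.
  destruct Ha as [->|Ha].
  - rewrite Nat.eqb_refl. simpl. f_equal. apply count_ext.
    intros x Hx. destruct (Nat.eqb_spec x a); [subst; contradiction|reflexivity].
  - rewrite IH by assumption.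
    destruct (Nat.eqb_spec y a); [subst; contradiction|]. simpl. lia.
Qed.

Lemma count_two_points l f g a b : NoDup l -> a <> b -> In a l -> In b l ->
  (forall x, In x l -> x <> a -> x <> b -> f x = g x) ->
  (count l f + Nat.b2n (g a) + Nat.b2n (g b) = count l g + Nat.b2n (f a) + Nat.b2n (f b))%nat.
Proof.
  intros Hl Hab Ha Hb H.
  rewrite (count_remove l f a), (count_remove l g a), (count_remove l _ b Hl Hb),
    (count_remove l (fun x => negb (Nat.eqb x a) && g x) b Hl Hb) by assumption.
  destruct (Nat.eqb_spec b a); [congruence|]. simpl.
  rewrite (count_ext l (fun x => negb (Nat.eqb x b) && (negb (Nat.eqb x a) && f x))
                      (fun x => negb (Nat.eqb x b) && (negb (Nat.eqb x a) && g x))); [lia|].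
  intros x Hx. destruct (Nat.eqb_spec x b), (Nat.eqb_spec x a); simpl; auto.
Qed.

Lemma chips_In n i : In i (chips n) <-> is_chip n i.
Proof. unfold chips, is_chip. rewrite in_seq. lia. Qed.

Lemma chips_NoDup n : NoDup (chips n).
Proof. apply seq_NoDup. Qed.

Lemma load_ge_of_NoDup n pos s l : NoDup l ->
  (forall i, In i l -> is_chip n i /\ pos i = s) -> (length l <= load n pos s)%nat.
Proof.
  intros Hl H. apply count_ge_of_incl; [exact Hl|].
  intros i Hi. destruct (H i Hi) as [Ci Pi]. split; [now apply chips_In|now apply Z.eqb_eq].
Qed.

Lemma load_zero n pos t : (forall i, is_chip n i -> pos i <> t) -> load n pos t = 0%nat.
Proof.
  intros H. unfold load. destruct (filter _ _) as [|i l] eqn:E; [reflexivity|].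
  assert (Hi : In i (filter (fun i => pos i =? t) (chips n))) by (rewrite E; now left).
  apply filter_In in Hi as [Hi Pi]. apply chips_In in Hi. apply Z.eqb_eq in Pi.
  now destruct (H i Hi).
Qed.

Lemma load_one_resident n pos t : load n pos t = 1%nat ->
  exists r, is_chip n r /\ pos r = t /\ forall i, is_chip n i -> pos i = t -> i = r.
Proof.
  unfold load. intros E. destruct (filter _ _) as [|r [|]] eqn:F; try discriminate.
  assert (Spec : forall i, In i [r] <-> is_chip n i /\ pos i = t).
  { intros i. rewrite <- F, filter_In, chips_In, Z.eqb_eq. reflexivity. }
  destruct (proj1 (Spec r) (or_introl eq_refl)) as [Cr Pr].
  exists r. split; [exact Cr|split; [exact Pr|]].
  intros i Ci Pi. destruct (proj2 (Spec i) (conj Ci Pi)) as [-> | []]. reflexivity.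
Qed.

Lemma load_two_pair n pos t : load n pos t = 2%nat ->
  exists a b, is_chip n a /\ is_chip n b /\ (a < b)%nat /\ pos a = t /\ pos b = t /\
    forall i, is_chip n i -> pos i = t -> i = a \/ i = b.
Proof.
  unfold load. intros E. destruct (filter _ _) as [|x [|y []]] eqn:F; try discriminate.
  assert (Spec : forall i, In i [x; y] <-> is_chip n i /\ pos i = t).
  { intros i. rewrite <- F, filter_In, chips_In, Z.eqb_eq. reflexivity. }
  assert (Hxy : x <> y).
  { pose proof (NoDup_filter (fun i => pos i =? t) (chips_NoDup n)) as D.
    rewrite F in D. inversion_clear D as [|? ? Hx]. intros <-. apply Hx. now left. }
  destruct (proj1 (Spec x) (or_introl eq_refl)) as [Cx Px].
  destruct (proj1 (Spec y) (or_intror (or_introl eq_refl))) as [Cy Py].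
  assert (U : forall i, is_chip n i -> pos i = t -> i = x \/ i = y).
  { intros i Ci Pi. destruct (proj2 (Spec i) (conj Ci Pi)) as [-> | [-> | []]]; auto. }
  destruct (Nat.lt_gt_cases x y) as [[Lt|Lt] _]; [exact Hxy| |].
  - exists x, y. do 5 (split; [assumption|]). exact U.
  - exists y, x. do 5 (split; [assumption|]). intros i Ci Pi. destruct (U i Ci Pi); auto.
Qed.

Lemma stable_of_load_le_one n pos : (forall t, (load n pos t <= 1)%nat) -> stable n pos.
Proof.
  intros H i j Ci Cj Hij Pij.
  assert (L : (length [i; j] <= load n pos (pos i))%nat).
  { apply load_ge_of_NoDup.
    - constructor; [intros [E|[]]; congruence|constructor; [easy|constructor]].
    - intros k [<-|[<-|[]]]; auto. }
  specialize (H (pos i)). simpl in L. lia.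
Qed.

Ltac case_Z_tests :=
  repeat match goal with
  | |- context [Z.eqb ?a ?b] => destruct (Z.eqb_spec a b)
  | |- context [Z.leb ?a ?b] => destruct (Z.leb_spec a b)
  end; cbn [andb Nat.b2n Z.b2z] in *.

Definition prefix_load (n : nat) (pos : nat -> Z) (k : Z) : nat :=
  count (chips n) (fun i => pos i <=? k).

Lemma prefix_load_succ n pos k :
  prefix_load n pos k = (prefix_load n pos (k - 1) + load n pos k)%nat.
Proof.
  apply count_add. intros x _. case_Z_tests; lia.
Qed.

Lemma prefix_load_below n pos k :
  (forall i, is_chip n i -> k < pos i) -> prefix_load n pos k = 0%nat.
Proof.
  intros H. unfold prefix_load. rewrite (count_ext _ _ (fun _ => false)).
  - unfold count. now rewrite filter_false.
  - intros x Hx. apply Z.leb_gt, H, chips_In, Hx.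
Qed.

Lemma prefix_load_above n pos k :
  (forall i, is_chip n i -> pos i <= k) -> prefix_load n pos k = S n.
Proof.
  intros H. unfold prefix_load. rewrite (count_ext _ _ (fun _ => true)).
  - unfold count. rewrite filter_true. apply length_seq.
  - intros x Hx. apply Z.leb_le, H, chips_In, Hx.
Qed.

Record balanced (n : nat) (pos : nat -> Z) : Prop := {
  balanced_range : forall i, is_chip n i -> 0 <= pos i <= Z.of_nat n + 1;
  balanced_prefix : forall k, 0 <= k <= Z.of_nat n + 1 ->
    k <= Z.of_nat (prefix_load n pos k) <= k + 1 }.
Arguments balanced_range {n pos}.

Lemma balanced_double_site n pos a b s : balanced n pos ->
  is_chip n a -> is_chip n b -> a <> b -> pos a = s -> pos b = s ->
  1 <= s <= Z.of_nat n /\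
  Z.of_nat (prefix_load n pos s) = s + 1 /\ Z.of_nat (prefix_load n pos (s - 1)) = s - 1 /\
  (forall i, is_chip n i -> pos i = s -> i = a \/ i = b).
Proof.
  intros [Hrange Hprefix] Ca Cb Hab Pa Pb.
  assert (Two : (length [a; b] <= load n pos s)%nat).
  { apply load_ge_of_NoDup; [|intros i [<-|[<-|[]]]; auto].
    constructor; [intros [E|[]]; congruence|constructor; [easy|constructor]]. }
  simpl in Two. pose proof (prefix_load_succ n pos s) as Hs. pose proof (Hrange a Ca).
  assert (Lo : 1 <= s).
  { destruct (Z.le_gt_cases 1 s); [assumption|].
    rewrite (prefix_load_below n pos (s - 1)) in Hs by (intros i Ci; specialize (Hrange i Ci); lia).
    specialize (Hprefix s ltac:(lia)). lia. }
  assert (Hi : s <= Z.of_nat n).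
  { destruct (Z.le_gt_cases s (Z.of_nat n)); [assumption|].
    rewrite (prefix_load_above n pos s) in Hs by (intros i Ci; specialize (Hrange i Ci); lia).
    specialize (Hprefix (s - 1) ltac:(lia)). lia. }
  pose proof (Hprefix s ltac:(lia)). pose proof (Hprefix (s - 1) ltac:(lia)).
  split; [lia|split; [lia|split; [lia|]]].
  intros i Ci Pi. destruct (Nat.eq_dec i a) as [|Hia]; [auto|].
  destruct (Nat.eq_dec i b) as [|Hib]; [auto|]. exfalso.
  assert (Three : (length [a; b; i] <= load n pos s)%nat).
  { apply load_ge_of_NoDup; [|intros j [<-|[<-|[<-|[]]]]; auto].
    constructor; [intros [E|[E|[]]]; congruence|].
    constructor; [intros [E|[]]; congruence|constructor; [easy|constructor]]. }
  simpl in Three. lia.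
Qed.

Definition fire (pos : nat -> Z) (a b : nat) (s : Z) : nat -> Z :=
  fun i => if Nat.eqb i a then s - 1 else if Nat.eqb i b then s + 1 else pos i.

Lemma fire_left pos a b s : fire pos a b s a = s - 1.
Proof. unfold fire. now rewrite Nat.eqb_refl. Qed.

Lemma fire_right pos a b s : a <> b -> fire pos a b s b = s + 1.
Proof. intros H. unfold fire. destruct (Nat.eqb_spec b a); [congruence|]. now rewrite Nat.eqb_refl. Qed.

Lemma fire_other pos a b s i : i <> a -> i <> b -> fire pos a b s i = pos i.
Proof.
  intros Ha Hb. unfold fire.
  destruct (Nat.eqb_spec i a), (Nat.eqb_spec i b); congruence.
Qed.

Lemma topple_step_fire n pos q : topple_step n pos q ->
  exists a b s, is_chip n a /\ is_chip n b /\ (a < b)%nat /\ pos a = s /\ pos b = s /\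
    q = fire pos a b s.
Proof.
  intros (a & b & s & Ca & Cb & Hab & Pa & Pb & Hq).
  exists a, b, s. do 5 (split; [assumption|]).
  apply functional_extensionality. exact Hq.
Qed.

Lemma fire_topple_step n pos a b s : is_chip n a -> is_chip n b -> (a < b)%nat ->
  pos a = s -> pos b = s -> topple_step n pos (fire pos a b s).
Proof. intros. exists a, b, s. auto 7. Qed.

Lemma load_fire n pos a b s t : is_chip n a -> is_chip n b -> a <> b -> pos a = s -> pos b = s ->
  Z.of_nat (load n (fire pos a b s) t) + 2 * Z.b2z (t =? s) =
  Z.of_nat (load n pos t) + Z.b2z (t =? s - 1) + Z.b2z (t =? s + 1).
Proof.
  intros Ca Cb Hab Pa Pb.
  pose proof (count_two_points (chips n) (fun i => pos i =? t) (fun i => fire pos a b s i =? t)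
    a b (chips_NoDup n) Hab (proj2 (chips_In _ _) Ca) (proj2 (chips_In _ _) Cb)) as H.
  cbv beta in H. rewrite fire_left, (fire_right pos a b s Hab), Pa, Pb in H.
  specialize (H ltac:(intros; now rewrite fire_other)). unfold load, count in *.
  revert H. case_Z_tests; lia.
Qed.

Lemma prefix_load_fire n pos a b s k : is_chip n a -> is_chip n b -> a <> b -> pos a = s -> pos b = s ->
  Z.of_nat (prefix_load n (fire pos a b s) k) + Z.b2z (k =? s) =
  Z.of_nat (prefix_load n pos k) + Z.b2z (k =? s - 1).
Proof.
  intros Ca Cb Hab Pa Pb.
  pose proof (count_two_points (chips n) (fun i => pos i <=? k) (fun i => fire pos a b s i <=? k)
    a b (chips_NoDup n) Hab (proj2 (chips_In _ _) Ca) (proj2 (chips_In _ _) Cb)) as H.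
  cbv beta in H. rewrite fire_left, (fire_right pos a b s Hab), Pa, Pb in H.
  specialize (H ltac:(intros; now rewrite fire_other)). unfold prefix_load.
  revert H. case_Z_tests; lia.
Qed.

Lemma balanced_step n pos q : balanced n pos -> topple_step n pos q -> balanced n q.
Proof.
  intros Hbal Hstep.
  destruct (topple_step_fire _ _ _ Hstep) as (a & b & s & Ca & Cb & Hab & Pa & Pb & ->).
  destruct (balanced_double_site n pos a b s Hbal Ca Cb ltac:(lia) Pa Pb) as (Hs & Ls & Ls1 & _).
  destruct Hbal as [Hrange Hprefix]. split.
  - intros i Ci. unfold fire.
    destruct (Nat.eqb_spec i a), (Nat.eqb_spec i b); [lia|lia|lia|auto].
  - intros k Hk. pose proof (prefix_load_fire n pos a b s k Ca Cb ltac:(lia) Pa Pb) as E.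
    specialize (Hprefix k Hk).
    revert E. case_Z_tests; subst; lia.
Qed.

Lemma balanced_reach n pos q : balanced n pos -> topple_reach n pos q -> balanced n q.
Proof.
  intros Hbal H. apply clos_rt_rt1n_iff in H.
  induction H as [|x y z Sxy _ IH]; [exact Hbal|].
  exact (IH (balanced_step n x y Hbal Sxy)).
Qed.

(* The two doubled sites are not adjacent, so neither firing touches the other's chips. *)
Lemma topple_step_diamond n x y1 y2 : balanced n x ->
  topple_step n x y1 -> topple_step n x y2 ->
  y1 = y2 \/ exists z, topple_step n y1 z /\ topple_step n y2 z.
Proof.
  intros Hbal S1 S2.
  destruct (topple_step_fire _ _ _ S1) as (a & b & s & Ca & Cb & Hab & Pa & Pb & ->).
  destruct (topple_step_fire _ _ _ S2) as (a' & b' & t & Ca' & Cb' & Hab' & Pa' & Pb' & ->).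
  destruct (balanced_double_site n x a b s Hbal Ca Cb ltac:(lia) Pa Pb) as (Hs & L1 & L2 & U).
  destruct (balanced_double_site n x a' b' t Hbal Ca' Cb' ltac:(lia) Pa' Pb') as (Ht & L1' & L2' & _).
  destruct (Z.eq_dec s t) as [<-|Hst].
  - left. destruct (U a' Ca' Pa') as [->| ->], (U b' Cb' Pb') as [->| ->]; [lia|reflexivity|lia|lia].
  - right.
    assert (t <> s + 1) by (intros ->; rewrite Z.add_simpl_r in L2'; lia).
    assert (t <> s - 1) by (intros ->; lia).
    assert (a' <> a /\ a' <> b /\ b' <> a /\ b' <> b) as (? & ? & ? & ?)
      by (repeat split; intros ->; congruence).
    exists (fire (fire x a b s) a' b' t). split.
    + apply fire_topple_step; auto; rewrite fire_other; auto.
    + replace (fire (fire x a b s) a' b' t) with (fire (fire x a' b' t) a b s).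
      * apply fire_topple_step; auto; rewrite fire_other; auto; lia.
      * apply functional_extensionality. intros i. unfold fire.
        destruct (Nat.eqb_spec i a), (Nat.eqb_spec i b), (Nat.eqb_spec i a'), (Nat.eqb_spec i b');
          subst; try lia; reflexivity.
Qed.

Lemma stable_no_step n x y : stable n x -> ~ topple_step n x y.
Proof.
  intros Hst Hstep.
  destruct (topple_step_fire _ _ _ Hstep) as (a & b & s & Ca & Cb & Hab & Pa & Pb & _).
  apply (Hst a b Ca Cb ltac:(lia)). congruence.
Qed.

Lemma stable_reach_eq n x y : stable n x -> topple_reach n x y -> y = x.
Proof.
  intros Hst H. apply clos_rt_rt1n_iff in H. destruct H as [|z w Sxz]; [reflexivity|].
  destruct (stable_no_step n x z Hst Sxz).
Qed.

Lemma topple_step_to_stable n x y f : balanced n x -> topple_step n x y ->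
  topple_reach n x f -> stable n f -> topple_reach n y f.
Proof.
  intros Hbal Sxy H Hf. apply clos_rt_rt1n_iff in H. revert y Sxy.
  induction H as [x|x z f Sxz Hzf IH]; intros y Sxy.
  - destruct (stable_no_step n x y Hf Sxy).
  - destruct (topple_step_diamond n x z y Hbal Sxz Sxy) as [<-|(w & Szw & Syw)].
    + now apply clos_rt_rt1n_iff.
    + apply rt_trans with w; [now apply rt_step|].
      exact (IH (balanced_step n x z Hbal Sxz) Hf w Szw).
Qed.

Lemma topple_reach_to_stable n x y f : balanced n x -> topple_reach n x y ->
  topple_reach n x f -> stable n f -> topple_reach n y f.
Proof.
  intros Hbal H. apply clos_rt_rt1n_iff in H.
  induction H as [x|x z y Sxz _ IH]; intros Hf Sf; [exact Hf|].
  apply IH; [exact (balanced_step n x z Hbal Sxz)| |exact Sf].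
  exact (topple_step_to_stable n x z f Hbal Sxz Hf Sf).
Qed.

Lemma toppleable_reach_iff n x y : balanced n x -> topple_reach n x y ->
  (toppleable n x <-> toppleable n y).
Proof.
  intros Hbal H. split; intros (f & Hf & Sf & If); exists f; split; auto.
  - exact (topple_reach_to_stable n x y f Hbal H Hf Sf).
  - now apply rt_trans with y.
Qed.

Lemma top_chip_frozen n x y c : balanced n x -> is_chip n c -> x c = Z.of_nat n + 1 ->
  topple_reach n x y -> y c = Z.of_nat n + 1.
Proof.
  intros Hbal Cc Hc H. apply clos_rt_rt1n_iff in H.
  induction H as [x|x z y Sxz _ IH]; [exact Hc|].
  apply IH; [exact (balanced_step n x z Hbal Sxz)|].
  destruct (topple_step_fire _ _ _ Sxz) as (a & b & s & Ca & Cb & Hab & Pa & Pb & ->).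
  destruct (balanced_double_site n x a b s Hbal Ca Cb ltac:(lia) Pa Pb) as (Hs & _).
  rewrite fire_other; [exact Hc| |]; intros ->; lia.
Qed.

Lemma not_toppleable_top_not_max n x c : balanced n x -> is_chip n c -> c <> S n ->
  x c = Z.of_nat n + 1 -> ~ toppleable n x.
Proof.
  intros Hbal Cc Hc Xc (f & Hf & _ & If).
  assert (Cmax : is_chip n (S n)) by (unfold is_chip; lia).
  pose proof (top_chip_frozen n x f c Hbal Cc Xc Hf) as Fc.
  pose proof (balanced_range (balanced_reach n x f Hbal Hf) (S n) Cmax).
  assert (f c < f (S n)) by (apply If; unfold is_chip in *; auto; lia).
  lia.
Qed.

Lemma topple_step_restrict n x y : balanced (S n) x -> x (S (S n)) = Z.of_nat (S n) + 1 ->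
  topple_step (S n) x y -> topple_step n x y /\ y (S (S n)) = Z.of_nat (S n) + 1.
Proof.
  intros Hbal Hx Sxy.
  destruct (topple_step_fire _ _ _ Sxy) as (a & b & s & Ca & Cb & Hab & Pa & Pb & ->).
  destruct (balanced_double_site (S n) x a b s Hbal Ca Cb ltac:(lia) Pa Pb) as (Hs & _).
  assert (a <> S (S n) /\ b <> S (S n)) as [] by (split; intros ->; lia).
  split.
  - apply fire_topple_step; auto; unfold is_chip in *; lia.
  - now rewrite fire_other.
Qed.

Lemma topple_reach_restrict n x y : balanced (S n) x -> x (S (S n)) = Z.of_nat (S n) + 1 ->
  topple_reach (S n) x y -> topple_reach n x y.
Proof.
  intros Hbal Hx H. apply clos_rt_rt1n_iff in H.
  induction H as [x|x z y Sxz _ IH]; [apply rt_refl|].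
  destruct (topple_step_restrict n x z Hbal Hx Sxz) as [Sxz' Hz].
  apply rt_trans with z; [now apply rt_step|].
  exact (IH (balanced_step _ x z Hbal Sxz) Hz).
Qed.

Lemma topple_reach_extend n x y : topple_reach n x y ->
  topple_reach (S n) x y /\ y (S (S n)) = x (S (S n)).
Proof.
  intros H. apply clos_rt_rt1n_iff in H.
  induction H as [x|x z y Sxz _ [IHr IHe]]; [split; [apply rt_refl|reflexivity]|].
  destruct (topple_step_fire _ _ _ Sxz) as (a & b & s & Ca & Cb & Hab & Pa & Pb & ->).
  unfold is_chip in Ca, Cb. split.
  - apply rt_trans with (fire x a b s); [|exact IHr].
    apply rt_step, fire_topple_step; unfold is_chip; auto; lia.
  - rewrite IHe. apply fire_other; lia.
Qed.

Lemma toppleable_drop_top n x : balanced (S n) x -> balanced n x ->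
  x (S (S n)) = Z.of_nat (S n) + 1 -> (toppleable (S n) x <-> toppleable n x).
Proof.
  intros Hbal Hbal' Hx. split; intros (f & Hf & Sf & If).
  - exists f. split; [exact (topple_reach_restrict n x f Hbal Hx Hf)|].
    split; intros i j Ci Cj; [apply Sf|apply If]; unfold is_chip in *; lia.
  - destruct (topple_reach_extend n x f Hf) as [Hf' Ef].
    pose proof (balanced_range (balanced_reach n x f Hbal' Hf)) as Rf.
    exists f. split; [exact Hf'|split].
    + intros i j Ci Cj Hij.
      destruct (Nat.eq_dec i (S (S n))) as [->|Hi], (Nat.eq_dec j (S (S n))) as [->|Hj];
        try contradiction.
      * specialize (Rf j ltac:(unfold is_chip in *; lia)). lia.
      * specialize (Rf i ltac:(unfold is_chip in *; lia)). lia.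
      * apply Sf; unfold is_chip in *; lia.
    + intros i j Ci Cj Hij.
      destruct (Nat.eq_dec j (S (S n))) as [->|Hj].
      * specialize (Rf i ltac:(unfold is_chip in *; lia)). lia.
      * apply If; unfold is_chip in *; lia.
Qed.

Definition initial_load (n p : nat) (t : Z) : nat :=
  if (1 <=? t) && (t <=? Z.of_nat n) then (if t =? Z.of_nat p then 2 else 1) else 0.

Lemma in_S_range n p pos : in_S n p pos -> forall i, is_chip n i -> 1 <= pos i <= Z.of_nat n.
Proof. intros [H _]. exact H. Qed.

Lemma in_S_load n p pos t : in_S n p pos -> load n pos t = initial_load n p t.
Proof.
  intros Hpos. unfold initial_load.
  destruct (Z.leb_spec 1 t), (Z.leb_spec t (Z.of_nat n)); simpl.
  - destruct Hpos as [_ Hload]. replace t with (Z.of_nat (Z.to_nat t)) by lia.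
    rewrite Hload by lia.
    destruct (Nat.eqb_spec (Z.to_nat t) p), (Z.eqb_spec (Z.of_nat (Z.to_nat t)) (Z.of_nat p));
      lia.
  - apply load_zero. intros i Ci. pose proof (in_S_range n p pos Hpos i Ci). lia.
  - apply load_zero. intros i Ci. pose proof (in_S_range n p pos Hpos i Ci). lia.
  - lia.
Qed.

Lemma in_S_prefix_load n p pos k : in_S n p pos -> (1 <= p)%nat -> 0 <= k <= Z.of_nat n ->
  Z.of_nat (prefix_load n pos k) = k + Z.b2z (Z.of_nat p <=? k).
Proof.
  intros Hpos Hp Hk. replace k with (Z.of_nat (Z.to_nat k)) by lia.
  assert (Hk' : (Z.to_nat k <= n)%nat) by lia. clear Hk.
  induction (Z.to_nat k) as [|j IH].
  - rewrite prefix_load_below by (intros i Ci; pose proof (in_S_range n p pos Hpos i Ci); lia).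
    case_Z_tests; lia.
  - rewrite prefix_load_succ, Nat2Z.inj_add, (in_S_load n p pos _ Hpos).
    replace (Z.of_nat (S j) - 1) with (Z.of_nat j) by lia. rewrite IH by lia.
    unfold initial_load. case_Z_tests; lia.
Qed.

Lemma in_S_balanced n p pos : in_S n p pos -> (1 <= p <= n)%nat -> balanced n pos.
Proof.
  intros Hpos Hp. pose proof (in_S_range n p pos Hpos) as Hr. split.
  - intros i Ci. specialize (Hr i Ci). lia.
  - intros k Hk. destruct (Z.eq_dec k (Z.of_nat n + 1)) as [->|Hkn].
    + rewrite prefix_load_above by (intros i Ci; specialize (Hr i Ci); lia). lia.
    + rewrite (in_S_prefix_load n p pos k Hpos) by lia. case_Z_tests; lia.
Qed.

Lemma in_S_window_count n p pos m : in_S n p pos -> (1 <= p)%nat ->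
  Z.of_nat p <= m <= Z.of_nat n ->
  Z.of_nat (count (chips n) (fun i => (Z.of_nat p <=? pos i) && (pos i <=? m))) = m - Z.of_nat p + 2.
Proof.
  intros Hpos Hp Hm.
  assert (Split : prefix_load n pos m = (prefix_load n pos (Z.of_nat p - 1) +
            count (chips n) (fun i => (Z.of_nat p <=? pos i)%Z && (pos i <=? m)%Z))%nat).
  { apply count_add. intros x _. case_Z_tests; lia. }
  pose proof (in_S_prefix_load n p pos m Hpos Hp ltac:(lia)) as Lm.
  pose proof (in_S_prefix_load n p pos (Z.of_nat p - 1) Hpos Hp ltac:(lia)) as Lp.
  revert Lm Lp. case_Z_tests; lia.
Qed.

Definition swept_load (n p : nat) (m t : Z) : nat :=
  if t =? Z.of_nat p - 1 then S (initial_load n p t)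
  else if (Z.of_nat p <=? t) && (t <=? m - 1) then 1
  else if t =? m then 0
  else if t =? m + 1 then S (initial_load n p t)
  else initial_load n p t.

(* The state after toppling sites [p, p+1, ..., m] of [pos] in turn. Each firing at a site [t]
   sends the larger of its two chips on to [t + 1], so [c] is the largest chip that started in
   [[p, m]]. Any other chip [i] from there either stepped one site left, or was dropped at
   [q i] by the carry; it was then the largest of the [q i - p + 2] chips that started in
   [[p, q i]], whence [q i <= i + p - 2]. *)
Record swept (n p : nat) (pos : nat -> Z) (m : Z) (q : nat -> Z) (c : nat) : Prop := {
  carried_chip : is_chip n c;
  carried_site : q c = m + 1;
  carried_origin : Z.of_nat p <= pos c <= m;
  carried_max : forall i, is_chip n i -> Z.of_nat p <= pos i <= m -> (i <= c)%nat;
  swept_left : forall i, is_chip n i -> pos i < Z.of_nat p -> q i = pos i;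
  swept_right : forall i, is_chip n i -> m < pos i -> q i = pos i;
  swept_window : forall i, is_chip n i -> Z.of_nat p <= pos i <= m -> i <> c ->
    Z.of_nat p - 1 <= q i <= m - 1 /\ pos i - 1 <= q i /\
    (q i = pos i - 1 \/ q i <= Z.of_nat i + Z.of_nat p - 2);
  swept_loads : forall t, load n q t = swept_load n p m t }.
Arguments carried_chip {n p pos m q c}.
Arguments carried_site {n p pos m q c}.
Arguments carried_origin {n p pos m q c}.
Arguments carried_max {n p pos m q c}.
Arguments swept_left {n p pos m q c}.
Arguments swept_right {n p pos m q c}.
Arguments swept_window {n p pos m q c}.
Arguments swept_loads {n p pos m q c}.

Lemma swept_carried_large n p pos m q c : in_S n p pos -> (1 <= p)%nat ->
  Z.of_nat p <= m <= Z.of_nat n -> swept n p pos m q c -> m - Z.of_nat p + 2 <= Z.of_nat c.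
Proof.
  intros Hpos Hp Hm Hsw. rewrite <- (in_S_window_count n p pos m Hpos Hp Hm).
  rewrite <- (length_seq c 1). apply inj_le, count_le_of_incl; [apply chips_NoDup|].
  intros i Ci Hi. apply chips_In in Ci. apply andb_prop in Hi as [H1 H2].
  apply Z.leb_le in H1, H2. pose proof (carried_max Hsw i Ci ltac:(lia)).
  apply in_seq. unfold is_chip in Ci. lia.
Qed.

Lemma sweep_start n p pos : in_S n p pos -> (1 <= p <= n)%nat ->
  exists q c, topple_reach n pos q /\ swept n p pos (Z.of_nat p) q c.
Proof.
  intros Hpos Hp.
  assert (L : load n pos (Z.of_nat p) = 2%nat).
  { rewrite (in_S_load n p pos _ Hpos). unfold initial_load. case_Z_tests; lia. }
  destruct (load_two_pair n pos _ L) as (a & b & Ca & Cb & Hab & Pa & Pb & U).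
  exists (fire pos a b (Z.of_nat p)), b.
  split; [now apply rt_step, fire_topple_step|].
  assert (Hab' : a <> b) by lia.
  split; auto.
  - now apply fire_right.
  - lia.
  - intros i Ci Pi. destruct (U i Ci ltac:(lia)) as [-> | ->]; lia.
  - intros i Ci Pi. rewrite fire_other; [reflexivity| |]; intros ->; lia.
  - intros i Ci Pi. rewrite fire_other; [reflexivity| |]; intros ->; lia.
  - intros i Ci Pi Hib. destruct (U i Ci ltac:(lia)) as [-> | ->]; [|contradiction].
    rewrite fire_left. lia.
  - intros t. apply Nat2Z.inj.
    pose proof (load_fire n pos a b (Z.of_nat p) t Ca Cb Hab' Pa Pb) as E.
    rewrite (in_S_load n p pos _ Hpos) in E. revert E.
    unfold swept_load, initial_load. case_Z_tests; lia.
Qed.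

Lemma swept_fire n p pos m q c r lo hi : in_S n p pos -> (1 <= p)%nat ->
  Z.of_nat p <= m -> m + 1 <= Z.of_nat n -> swept n p pos m q c ->
  is_chip n r -> pos r = m + 1 -> (forall i, is_chip n i -> pos i = m + 1 -> i = r) ->
  (lo = c /\ hi = r \/ lo = r /\ hi = c) -> (lo < hi)%nat ->
  swept n p pos (m + 1) (fire q lo hi (m + 1)) hi.
Proof.
  intros Hpos Hp Hm Hmn Hsw Cr Pr Ur Hlh Hlt.
  pose proof (swept_carried_large n p pos m q c Hpos Hp ltac:(lia) Hsw) as Large.
  destruct Hsw as [Cc Qc Oc Mc SL SR SW SLd].
  assert (Qr : q r = m + 1) by (rewrite <- Pr; apply SR; auto; lia).
  assert (Hrc : r <> c) by (intros ->; lia).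
  assert (F : is_chip n lo /\ is_chip n hi /\ q lo = m + 1 /\ q hi = m + 1 /\
              Z.of_nat p <= pos hi <= m + 1 /\ (c <= hi)%nat /\ (r <= hi)%nat)
    by (destruct Hlh as [[-> ->]|[-> ->]]; unfold is_chip in *; repeat split; lia).
  destruct F as (Clo & Chi & Qlo & Qhi & Ohi & Chi' & Rhi).
  assert (Olo : Z.of_nat p <= pos lo <= m + 1) by (destruct Hlh as [[-> ->]|[-> ->]]; lia).
  assert (Hne : lo <> hi) by lia.
  split; auto.
  - now apply fire_right.
  - intros i Ci Pi. destruct (Z.eq_dec (pos i) (m + 1)) as [E|E].
    + now rewrite (Ur i Ci E).
    + specialize (Mc i Ci ltac:(lia)). lia.
  - intros i Ci Pi. rewrite fire_other; [auto| |]; intros ->; lia.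
  - intros i Ci Pi. rewrite fire_other; [apply SR; auto; lia| |]; intros ->; lia.
  - intros i Ci Pi Hih. destruct (Nat.eq_dec i lo) as [->|Hil].
    + rewrite fire_left. destruct Hlh as [[-> ->]|[-> ->]]; lia.
    + assert (i <> c /\ i <> r) as [Hic Hir] by (destruct Hlh as [[-> ->]|[-> ->]]; auto).
      assert (pos i <> m + 1) by (intros E; apply Hir, Ur; auto).
      rewrite fire_other by assumption.
      destruct (SW i Ci ltac:(lia) Hic) as (T1 & T2 & T3). lia.
  - intros t. apply Nat2Z.inj.
    pose proof (load_fire n q lo hi (m + 1) t Clo Chi Hne Qlo Qhi) as E.
    rewrite SLd in E.
    assert (Lt : initial_load n p t = 1%nat \/ t <> m + 1).
    { destruct (Z.eq_dec t (m + 1)) as [->|]; [left|right; assumption].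
      unfold initial_load. case_Z_tests; lia. }
    revert E. unfold swept_load. case_Z_tests; lia.
Qed.

Lemma sweep_step n p pos m q c : in_S n p pos -> (1 <= p)%nat ->
  Z.of_nat p <= m -> m + 1 <= Z.of_nat n -> swept n p pos m q c ->
  exists q' c', topple_step n q q' /\ swept n p pos (m + 1) q' c'.
Proof.
  intros Hpos Hp Hm Hmn Hsw.
  assert (L : load n pos (m + 1) = 1%nat).
  { rewrite (in_S_load n p pos _ Hpos). unfold initial_load. case_Z_tests; lia. }
  destruct (load_one_resident n pos _ L) as (r & Cr & Pr & Ur).
  assert (Qr : q r = m + 1) by (rewrite <- Pr; apply (swept_right Hsw); auto; lia).
  pose proof (carried_site Hsw) as Qc.
  pose proof (carried_chip Hsw) as Cc.
  assert (Hrc : r <> c) by (intros ->; pose proof (carried_origin Hsw); lia).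
  destruct (Nat.lt_gt_cases c r) as [[Lt|Lt] _]; [congruence| |].
  - exists (fire q c r (m + 1)), r. split; [now apply fire_topple_step|].
    apply (swept_fire n p pos m q c r c r); auto.
  - exists (fire q r c (m + 1)), c. split; [now apply fire_topple_step|].
    apply (swept_fire n p pos m q c r r c); auto.
Qed.

Lemma sweep n p pos : in_S n p pos -> (1 <= p <= n)%nat ->
  exists q c, topple_reach n pos q /\ swept n p pos (Z.of_nat n) q c.
Proof.
  intros Hpos Hp.
  assert (Gen : forall k, (p + k <= n)%nat ->
    exists q c, topple_reach n pos q /\ swept n p pos (Z.of_nat (p + k)) q c).
  { induction k as [|k IH]; intros Hk.
    - rewrite Nat.add_0_r. exact (sweep_start n p pos Hpos Hp).
    - destruct (IH ltac:(lia)) as (q & c & Hq & Hsw).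
      destruct (sweep_step n p pos (Z.of_nat (p + k)) q c Hpos ltac:(lia) ltac:(lia) ltac:(lia) Hsw)
        as (q' & c' & Step & Hsw').
      exists q', c'. split; [now apply rt_trans with q; [|apply rt_step]|].
      now replace (Z.of_nat (p + S k)) with (Z.of_nat (p + k) + 1) by lia. }
  replace (Z.of_nat n) with (Z.of_nat (p + (n - p))) by lia.
  apply Gen. lia.
Qed.

Definition in_band (n p : nat) (pos : nat -> Z) : Prop :=
  forall i : nat, (1 <= i <= S n)%nat ->
    Z.of_nat p + Z.of_nat i - Z.of_nat n - 1 <= pos i <= Z.of_nat p + Z.of_nat i - 1.

Lemma swept_not_in_band n p pos q c : in_S n p pos -> swept n p pos (Z.of_nat n) q c ->
  c <> S n -> ~ in_band n p pos.
Proof.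
  intros Hpos Hsw Hc Hband.
  assert (Cmax : is_chip n (S n)) by (unfold is_chip; lia).
  pose proof (in_S_range n p pos Hpos (S n) Cmax).
  pose proof (Hband (S n) ltac:(lia)).
  pose proof (carried_max Hsw (S n) Cmax ltac:(lia)).
  pose proof (carried_chip Hsw). unfold is_chip in *. lia.
Qed.

Lemma toppleable_stable_iff n x : stable n x -> (toppleable n x <-> reads_increasing n x).
Proof.
  intros Hst. split.
  - intros (f & Hf & _ & If). now rewrite (stable_reach_eq n x f Hst Hf) in If.
  - intros Hinc. exists x. split; [apply rt_refl|now split].
Qed.

Lemma stable_staircase n x : stable n x ->
  (forall i, (1 <= i <= n)%nat -> 0 <= x i <= Z.of_nat i - 1) ->
  forall i, (1 <= i <= n)%nat -> x i = Z.of_nat i - 1.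
Proof.
  intros Hst Hx i Hi.
  induction i as [i IH] using lt_wf_ind.
  destruct (Z.eq_dec (x i) (Z.of_nat i - 1)) as [|Hne]; [assumption|exfalso].
  pose proof (Hx i Hi).
  set (j := S (Z.to_nat (x i))).
  assert (Hj : x j = x i) by (unfold j; rewrite IH; lia).
  apply (Hst j i); unfold is_chip, j in *; lia.
Qed.

Lemma reads_increasing_gap n x i j : reads_increasing n x -> is_chip n i -> is_chip n j ->
  (i <= j)%nat -> x i + Z.of_nat (j - i) <= x j.
Proof.
  intros Hinc Ci Cj Hij. induction j as [|j IH]; [unfold is_chip in Cj; lia|].
  destruct (Nat.eq_dec i (S j)) as [->|Hne]; [rewrite Nat.sub_diag; lia|].
  assert (Cj' : is_chip n j) by (unfold is_chip in *; lia).
  specialize (IH Cj' ltac:(lia)).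
  assert (x j < x (S j)) by (apply Hinc; auto).
  lia.
Qed.

Lemma swept_p1_stable n pos q c : (1 <= n)%nat -> swept n 1 pos (Z.of_nat n) q c -> stable n q.
Proof.
  intros Hn Hsw. apply stable_of_load_le_one. intros t.
  rewrite (swept_loads Hsw). unfold swept_load, initial_load. case_Z_tests; lia.
Qed.

Lemma swept_p1_increasing_iff n pos q : in_S n 1 pos -> swept n 1 pos (Z.of_nat n) q (S n) ->
  stable n q -> (reads_increasing n q <-> in_band n 1 pos).
Proof.
  intros Hpos Hsw Hst. pose proof (in_S_range n 1 pos Hpos) as Hr.
  assert (W : forall i, (1 <= i <= n)%nat -> 0 <= q i <= Z.of_nat n - 1 /\ pos i - 1 <= q i /\
                (q i = pos i - 1 \/ q i <= Z.of_nat i - 1)).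
  { intros i Hi. assert (Ci : is_chip n i) by (unfold is_chip; lia).
    specialize (Hr i Ci). destruct (swept_window Hsw i Ci ltac:(lia) ltac:(lia)) as (T1 & T2 & T3).
    lia. }
  split.
  - intros Hinc i Hi. specialize (Hr i ltac:(unfold is_chip; lia)).
    destruct (Nat.eq_dec i (S n)) as [->|Hin]; [lia|].
    pose proof (reads_increasing_gap n q i n Hinc ltac:(unfold is_chip; lia)
                  ltac:(unfold is_chip; lia) ltac:(lia)).
    pose proof (W i ltac:(lia)). pose proof (W n ltac:(lia)). lia.
  - intros Hband.
    assert (Stair : forall i, (1 <= i <= n)%nat -> q i = Z.of_nat i - 1).
    { apply (stable_staircase n q Hst). intros i Hi.
      specialize (Hband i ltac:(lia)). pose proof (W i Hi). lia. }
    pose proof (carried_site Hsw).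
    intros i j Ci Cj Hij. unfold is_chip in *.
    rewrite (Stair i) by lia.
    destruct (Nat.eq_dec j (S n)) as [->|Hjn]; [lia|].
    rewrite (Stair j) by lia. lia.
Qed.

Lemma load_drop_top n x t : x (S (S n)) <> t -> load (S n) x t = load n x t.
Proof.
  intros Hx. unfold load, chips. rewrite (seq_S (S n) 1), filter_app, length_app. simpl.
  destruct (Z.eqb_spec (x (S (S n))) t); [contradiction|]. simpl. lia.
Qed.

Lemma swept_in_S n p pos q : in_S (S n) (S p) pos -> (1 <= p <= n)%nat ->
  swept (S n) (S p) pos (Z.of_nat (S n)) q (S (S n)) -> in_S n p q.
Proof.
  intros Hpos Hp Hsw. pose proof (in_S_range _ _ pos Hpos) as Hr. split.
  - intros i Ci. assert (Ci' : is_chip (S n) i) by (unfold is_chip in *; lia).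
    specialize (Hr i Ci'). destruct (Z.lt_ge_cases (pos i) (Z.of_nat (S p))).
    + rewrite (swept_left Hsw) by assumption. lia.
    + destruct (swept_window Hsw i Ci' ltac:(lia) ltac:(unfold is_chip in *; lia)) as (T1 & _).
      lia.
  - intros s Hs. rewrite <- load_drop_top by (rewrite (carried_site Hsw); lia).
    rewrite (swept_loads Hsw). unfold swept_load, initial_load.
    destruct (Nat.eqb_spec s p); apply Nat2Z.inj; case_Z_tests; lia.
Qed.

Lemma swept_in_band_iff n p pos q : in_S (S n) (S p) pos -> (1 <= p <= n)%nat ->
  swept (S n) (S p) pos (Z.of_nat (S n)) q (S (S n)) ->
  (in_band n p q <-> in_band (S n) (S p) pos).
Proof.
  intros Hpos Hp Hsw. pose proof (in_S_range _ _ pos Hpos) as Hr.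
  assert (Moved : forall i, (1 <= i <= S n)%nat -> Z.of_nat (S p) <= pos i ->
            Z.of_nat p <= q i /\ pos i - 1 <= q i /\
            (q i = pos i - 1 \/ q i <= Z.of_nat i + Z.of_nat p - 1)).
  { intros i Hi Pi. assert (Ci : is_chip (S n) i) by (unfold is_chip; lia).
    specialize (Hr i Ci). destruct (swept_window Hsw i Ci ltac:(lia) ltac:(lia)) as (T1 & T2 & T3).
    lia. }
  split.
  - intros Hband i Hi. specialize (Hr i ltac:(unfold is_chip; lia)).
    destruct (Nat.eq_dec i (S (S n))) as [->|Hin]; [pose proof (carried_origin Hsw); lia|].
    specialize (Hband i ltac:(lia)).
    destruct (Z.lt_ge_cases (pos i) (Z.of_nat (S p))) as [Lt|Ge].
    + rewrite (swept_left Hsw) in Hband by (unfold is_chip; lia || assumption). lia.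
    + pose proof (Moved i ltac:(lia) Ge). lia.
  - intros Hband i Hi. specialize (Hr i ltac:(unfold is_chip; lia)).
    specialize (Hband i ltac:(lia)).
    destruct (Z.lt_ge_cases (pos i) (Z.of_nat (S p))) as [Lt|Ge].
    + rewrite (swept_left Hsw) by (unfold is_chip; lia || assumption). lia.
    + pose proof (Moved i ltac:(lia) Ge). lia.
Qed.

Theorem theorem4p2 (n p : nat) (pos : nat -> Z) :
  (1 <= n)%nat -> (1 <= p <= n)%nat -> in_S n p pos ->
  (toppleable n pos <->
   forall i : nat, (1 <= i <= S n)%nat ->
     Z.of_nat p + Z.of_nat i - Z.of_nat n - 1 <= pos i <= Z.of_nat p + Z.of_nat i - 1).
Proof.
  intros _ Hp Hpos. change (toppleable n pos <-> in_band n p pos).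
  revert n pos Hp Hpos. induction p as [|p IH]; intros n pos Hp Hpos; [lia|].
  destruct (sweep n (S p) pos Hpos Hp) as (q & c & Hreach & Hsw).
  pose proof (in_S_balanced n (S p) pos Hpos Hp) as Hbal.
  pose proof (balanced_reach n pos q Hbal Hreach) as Hbalq.
  rewrite (toppleable_reach_iff n pos q Hbal Hreach).
  destruct (Nat.eq_dec c (S n)) as [->|Hc].
  2: split; intros H; exfalso;
       [exact (not_toppleable_top_not_max n q c Hbalq (carried_chip Hsw) Hc (carried_site Hsw) H)
       |exact (swept_not_in_band n (S p) pos q c Hpos Hsw Hc H)].
  destruct p as [|p].
  - pose proof (swept_p1_stable n pos q (S n) ltac:(lia) Hsw) as Hst.
    rewrite (toppleable_stable_iff n q Hst).
    exact (swept_p1_increasing_iff n pos q Hpos Hsw Hst).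
  - destruct n as [|n]; [lia|].
    pose proof (swept_in_S n (S p) pos q Hpos ltac:(lia) Hsw) as Hq.
    rewrite (toppleable_drop_top n q Hbalq (in_S_balanced n (S p) q Hq ltac:(lia))
               (carried_site Hsw)).
    rewrite <- (swept_in_band_iff n (S p) pos q Hpos ltac:(lia) Hsw).
    exact (IH n q ltac:(lia) Hq).
Qed.
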